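(* Let $A$ be a cellular algebra with totally ordered cell indices $\lambda_1>\cdots>\lambda_r$ and let $\Lambda_0\subseteq\Lambda$ index its simple modules. For the cellular structure on $A\wr S_n$ described below, the set $(\underline{\Lambda}^r_n)_0$ of multipartitions $(\nu_1,\ldots,\nu_r)$ for which the cell form of $\Delta^{(\nu_1,\ldots,\nu_r)}$ is nonzero consists exactly of those $(\nu_1,\ldots,\nu_r)\in\underline{\Lambda}^r_n$ such that $\nu_i=()$ whenever $\lambda_i\notin\Lambda_0$, and every $\nu_i$ is $p$-restricted.
   Context: $k$ is a field of characteristic $p\ge0$. For a cellular algebra with cell modules $\Delta^\lambda$ carrying cell forms, $\Lambda_0$ is the set of $\lambda$ for which the cell form is not identically zero, and then $L^\lambda=\Delta^\lambda/\mathrm{rad}$ is simple; these give all simples without redundancy. A partition is $p$-restricted if $p=0$, or if $p>0$ and consecutive parts differ by less than $p$ (the empty partition $()$ is always $p$-restricted). $S^\nu$ denotes the cell module of $kS_m$ ($|\nu|=m$) in its standard cellular structure (dual of James's Specht module) with its cell form. $A\wr S_n$ ($kS_n\otimes A^{\otimes n}$ with product $(\sigma;a)(\pi;b)=(\sigma\pi;a_{(1)\pi^{-1}}b_1,\ldots,a_{(n)\pi^{-1}}b_n)$, permutations acting on the right) is cellular with anti-involution $(\sigma;a_1,\ldots,a_n)^*=(\sigma^{-1};a^*_{(1)\sigma},\ldots,a^*_{(n)\sigma})$ and cell indices the set $\underline{\Lambda}^r_n$ of length-$r$ multipartitions of $n$; for $\mu=(|\nu_1|,\ldots,|\nu_r|)$,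 its cell module $\Delta^{(\nu_1,\ldots,\nu_r)}$ is the induced module $\Theta^\mu\bigl((\Delta^{\lambda_1},\ldots,\Delta^{\lambda_r}),(S^{\nu_1},\ldots,S^{\nu_r})\bigr)=\bigl(\Delta(\lambda_1)^{\otimes\mu_1}\otimes\cdots\otimes\Delta(\lambda_r)^{\otimes\mu_r}\otimes S^{\nu_1}\otimes\cdots\otimes S^{\nu_r}\bigr)\otimes_{A\wr S_\mu}A\wr S_n$ (where $A\wr S_\mu$, spanned by $(\sigma;a)$ with $\sigma$ in the Young subgroup $S_\mu\cong\prod S_{\mu_i}$, acts by $(x_1\otimes\cdots\otimes x_n\otimes y_1\otimes\cdots\otimes y_r)(\sigma;a_1,\ldots,a_n)=x_{(1)\sigma^{-1}}a_1\otimes\cdots\otimes x_{(n)\sigma^{-1}}a_n\otimes y_1\sigma_1\otimes\cdots\otimes y_r\sigma_r$), with cell form $\langle x\otimes y\otimes\gamma,x'\otimes y'\otimes\gamma'\rangle=\delta_{\gamma\gamma'}\prod_i\langle y_i,y'_i\rangle\prod_j\langle x_j,x'_j\rangle$, where $x\otimes y\otimes\gamma$ denotes $(x_1\otimes\cdots\otimes x_n\otimes y_1\otimes\cdots\otimes y_r)\otimes(\gamma;1,\ldots,1)$ for $\gamma$ a minimal-length right coset representative of $S_\mu$ in $S_n$. $L^{(\nu_1,\ldots,\nu_r)}$ denotes the quotient of $\Delta^{(\nu_1,\ldots,\nu_r)}$ by the radical of its cell form. *)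

From HB Require Import structures.
From mathcomp Require Import all_boot all_order all_algebra all_fingroup all_field.
Set Implicit Arguments. Unset Strict Implicit. Unset Printing Implicit Defensive.
Import GRing.Theory.
Local Open Scope ring_scope.

Definition is_char (k : fieldType) (p : nat) : Prop :=
  (p = 0%N /\ forall q : nat, q \notin [pchar k]) \/ p \in [pchar k].

Definition is_partition (la : seq nat) : bool :=
  sorted geq la && all (fun x => 0 < x)%N la.

(* p-restricted: p = 0, or la_i - la_{i+1} < p for every i (with la_{l+1} = 0). *)
Definition p_restricted (p : nat) (la : seq nat) : bool :=
  (p == 0%N) || all (fun i => nth 0%N la i - nth 0%N la i.+1 < p)%N (iota 0 (size la)).

(* Cell indices are 'I_r, totally ordered by lambda_1 > ... > lambda_r, i.e.
   index i (0-based) is larger than index j iff i < j as naturals.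
   M i = #M(lambda_i); C i s t = C^{lambda_i}_{s t}. *)
Section Cellular.
Variables (k : fieldType) (A : falgType k).

Definition cell_basis (r : nat) (M : 'I_r -> nat)
    (C : forall i : 'I_r, 'I_(M i) -> 'I_(M i) -> A) : seq A :=
  flatten [seq flatten [seq [seq C i s t | t <- enum 'I_(M i)] | s <- enum 'I_(M i)]
          | i <- enum 'I_r].

Definition cell_above (r : nat) (M : 'I_r -> nat)
    (C : forall i : 'I_r, 'I_(M i) -> 'I_(M i) -> A) (i : 'I_r) : {vspace A} :=
  let above := filter (fun j0 : 'I_r => (j0 < i)%N) (enum 'I_r) in
  span (flatten [seq flatten [seq [seq C j s t | t <- enum 'I_(M j)] | s <- enum 'I_(M j)]
          | j <- above]).

Unset Implicit Arguments.
Record cellular_datum := CellularDatum {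
  cd_r : nat;
  cd_M : 'I_cd_r -> nat;
  cd_C : forall i : 'I_cd_r, 'I_(cd_M i) -> 'I_(cd_M i) -> A;
  cd_star : A -> A;
  (* the cell form phi_{lambda_i} on Delta(lambda_i), in the basis C_s *)
  cd_phi : forall i : 'I_cd_r, 'I_(cd_M i) -> 'I_(cd_M i) -> k;
  cd_basis : basis_of fullv (cell_basis cd_C);
  cd_star_lin : forall (a : k) (x y : A), cd_star (a *: x + y) = a *: cd_star x + cd_star y;
  cd_star_anti : forall x y : A, cd_star (x * y) = cd_star y * cd_star x;
  cd_star_invol : forall x : A, cd_star (cd_star x) = x;
  cd_star_C : forall (i : 'I_cd_r) (s t : 'I_(cd_M i)), cd_star (cd_C i s t) = cd_C i t s;
  cd_mul : forall (i : 'I_cd_r) (s : 'I_(cd_M i)) (a : A),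
    exists ra : 'I_(cd_M i) -> k, forall t : 'I_(cd_M i),
      a * cd_C i s t - \sum_(u < cd_M i) ra u *: cd_C i u t \in cell_above cd_C i;
  cd_phi_def : forall (i : 'I_cd_r) (s t u v : 'I_(cd_M i)),
    cd_C i s t * cd_C i u v - cd_phi i t u *: cd_C i s v \in cell_above cd_C i
}.
Set Implicit Arguments.

Definition in_Lambda0 (D : cellular_datum) (i : 'I_(cd_r D)) : Prop :=
  exists s t, cd_phi D i s t != 0.

End Cellular.
Arguments cellular_datum {k} A.
Arguments cd_r {k A}.
Arguments cd_M {k A}.
Arguments cd_C {k A}.
Arguments cd_phi {k A}.
Arguments cd_star {k A}.
Arguments in_Lambda0 {k A}.

(* Initial nu-tableau t^nu: positions 0..m-1 filled row by row. *)
Definition rowpos (la : seq nat) (q : nat) : nat :=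
  count (fun i => sumn (take i.+1 la) <= q)%N (iota 0 (size la)).
Definition colpos (la : seq nat) (q : nat) : nat := (q - sumn (take (rowpos la q) la))%N.

(* Tableau t_w (w : 'S_m) has entry w q at position q; then t_w sigma = t_{w * sigma}.
   R_{t_w} = row stabiliser; [t_w] = column tabloid (entry |-> column). *)
Definition row_stab (la : seq nat) (w : 'S_(sumn la)) : {set 'S_(sumn la)} :=
  [set sg : 'S_(sumn la) | [forall j, rowpos la (w^-1 (sg j))%g == rowpos la (w^-1 j)%g]].

Arguments row_stab : clear implicits.

Definition col_tabloid (la : seq nat) (w : 'S_(sumn la)) : 'I_(sumn la) -> nat :=
  fun j => colpos la (w^-1 j)%g.

Arguments col_tabloid : clear implicits.

(* S^nu is spanned by the (row-signed) dual polytabloids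
   f_t = sum_{sigma in R_t} sgn(sigma) [t sigma] in the column-tabloid module,
   whose standard form is <[t],[s]> = delta.  Value of the cell form on f_{t_w}, f_{t_v}: *)
Definition specht_form (k : fieldType) (la : seq nat) (w v : 'S_(sumn la)) : k :=
  \sum_(sg in row_stab la w) \sum_(tau in row_stab la v)
    ((-1) ^+ odd_perm sg * (-1) ^+ odd_perm tau *
     ([forall j, col_tabloid la (w * sg)%g j == col_tabloid la (v * tau)%g j])%:R).

Arguments specht_form : clear implicits.

Definition is_multipartition (r n : nat) (nu : 'I_r -> seq nat) : Prop :=
  (forall i, is_partition (nu i)) /\ (\sum_(i < r) sumn (nu i))%N = n.

Definition blockof (mu : seq nat) (j : nat) : nat :=
  count (fun i => sumn (take i.+1 mu) <= j)%N (iota 0 (size mu)).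

Definition young (n : nat) (mu : seq nat) : {set 'S_n} :=
  [set sg : 'S_n | [forall j : 'I_n, blockof mu (sg j) == blockof mu j]].

Definition inversions (n : nat) (sg : 'S_n) : nat :=
  #|[set ij : 'I_n * 'I_n | (ij.1 < ij.2)%N && (sg ij.2 < sg ij.1)%N]|.

Definition min_coset_rep (n : nat) (mu : seq nat) (g : 'S_n) : bool :=
  [forall tau in young n mu, (inversions g <= inversions (tau * g)%g)%N].

Section Wreath.
Variables (k : fieldType) (A : falgType k) (D : cellular_datum A) (n : nat)
          (nu : 'I_(cd_r D) -> seq nat).

Definition wr_mu (i : 'I_(cd_r D)) : nat := sumn (nu i).

(* The cell form of Delta^{(nu_1,...,nu_r)} on spanning vectors x (x) y (x) gamma:
   x = tensor of basis vectors of Delta(lambda_i)^{(x) mu_i}, x i j : 'I_(M i),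
   y i = dual polytabloid of S^{nu_i}, gamma a distinguished coset rep. *)
Definition wreath_form
    (x x' : forall i : 'I_(cd_r D), 'I_(wr_mu i) -> 'I_(cd_M D i))
    (y y' : forall i : 'I_(cd_r D), 'S_(sumn (nu i)))
    (g g' : 'S_n) : k :=
  (g == g')%:R *
  (\prod_(i < cd_r D) specht_form k (nu i) (y i) (y' i)) *
  (\prod_(i < cd_r D) \prod_(j < wr_mu i) cd_phi D i (x i j) (x' i j)).

Definition wreath_form_nonzero : Prop :=
  let mus := [seq wr_mu i | i <- enum 'I_(cd_r D)] in
  exists (g g' : 'S_n), [/\ min_coset_rep mus g, min_coset_rep mus g' &
  exists x x' y y', wreath_form x x' y y' g g' != 0].

End Wreath.
Arguments wreath_form_nonzero {k A} D n nu.

(* The cell form of Delta^nu over A wr S_n is a product of the cell forms of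
   A on the tensor factors Delta(lambda_i)^{(x) mu_i} and of the cell forms of
   the Specht modules S^{nu_i}.  So it is nonzero somewhere iff every
   Delta(lambda_i) with mu_i > 0 has a nonzero cell form (lambda_i in
   Lambda_0) and every S^{nu_i} has a nonzero cell form.  The latter is
   James's criterion, proved here for the explicit form on dual polytabloids
   of a partition la:
   - if la is p-restricted, the form of the initial tableau t^la against its
     column-flipped tableau equals the order of the group H of permutations
     preserving the rows of both (a rigidity lemma shows that only diagonal
     pairs contribute), and H has no element of order p;
   - if la_i - la_{i+1} >= p, a rotation of p columns generates a p-group
     acting without fixed points on the contributing pairs of either sign, so
     every value of the form is divisible by p.
   The file develops the combinatorics of Young diagrams, then the two halves
   of James's criterion, and derives the theorem at the end. *)

From HB Require Import structures.
From mathcomp Require Import all_boot all_order all_algebra all_fingroup all_field.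
From mathcomp Require Import all_solvable zify.

Set Implicit Arguments. Unset Strict Implicit. Unset Printing Implicit Defensive.
Import GRing.Theory.

Definition cell_index (la : seq nat) (a c : nat) : nat := sumn (take a la) + c.

Lemma rowpos_cons x la q :
  rowpos (x :: la) q = if q < x then 0 else (rowpos la (q - x)).+1.
Proof.
rewrite /rowpos /= -(addn0 1) iotaDl count_map /= take0 addn0.
case: ltnP => hq.
  apply/eqP; rewrite add0n -leqn0 leqNgt -has_count; apply/hasPn => i _ /=.
  by rewrite -ltnNge (leq_trans hq) // leq_addr.
rewrite add1n; congr _.+1; apply: eq_count => i /=.
by rewrite leq_subRL // add1n.
Qed.

Lemma colpos_cons x la q :
  colpos (x :: la) q = if q < x then q else colpos la (q - x).
Proof.
rewrite /colpos rowpos_cons; case: ltnP => hq /=; first by rewrite subn0.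
by rewrite subnDA.
Qed.

Lemma cell_index_cons x la a c : cell_index (x :: la) a.+1 c = x + cell_index la a c.
Proof. by rewrite /cell_index /= addnA. Qed.

Lemma rowpos_lt la q : q < sumn la -> rowpos la q < size la.
Proof.
elim: la q => [|x la IH] q //= hq; rewrite rowpos_cons; case: (ltnP q x) => // hx.
by rewrite /= ltnS IH // ltn_subLR.
Qed.

Lemma colpos_lt la q : q < sumn la -> colpos la q < nth 0 la (rowpos la q).
Proof.
elim: la q => [|x la IH] q //= hq; rewrite rowpos_cons colpos_cons.
case: (ltnP q x) => // hx /=.
by rewrite IH // ltn_subLR.
Qed.

Lemma cell_index_coords la q :
  q < sumn la -> cell_index la (rowpos la q) (colpos la q) = q.
Proof.
elim: la q => [|x la IH] q //= hq; rewrite rowpos_cons colpos_cons.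
case: (ltnP q x) => hx /=; first by rewrite /cell_index take0.
by rewrite cell_index_cons IH ?ltn_subLR // subnKC.
Qed.

Lemma cell_index_lt la a c :
  a < size la -> c < nth 0 la a -> cell_index la a c < sumn la.
Proof.
elim: la a => [|x la IH] [|a] //= ha hc.
  by rewrite /cell_index take0 /= (leq_trans hc) // leq_addr.
by rewrite cell_index_cons ltn_add2l IH.
Qed.

Lemma rowpos_cell la a c :
  a < size la -> c < nth 0 la a -> rowpos la (cell_index la a c) = a.
Proof.
elim: la a => [|x la IH] [|a] //= ha hc.
  by rewrite /cell_index take0 /= rowpos_cons hc.
by rewrite cell_index_cons rowpos_cons ltnNge leq_addr /= addKn IH.
Qed.

Lemma colpos_cell la a c :
  a < size la -> c < nth 0 la a -> colpos la (cell_index la a c) = c.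
Proof.
elim: la a => [|x la IH] [|a] //= ha hc.
  by rewrite /cell_index take0 /= colpos_cons hc.
by rewrite cell_index_cons colpos_cons ltnNge leq_addr /= addKn IH.
Qed.

Lemma geq_trans : transitive geq.
Proof. by move=> y x z hxy hyz; apply: leq_trans hyz hxy. Qed.

Lemma nth_geq_mono la i j : sorted geq la -> i <= j -> nth 0 la j <= nth 0 la i.
Proof.
move=> hs hij; case: (ltnP j (size la)) => hj; last by rewrite nth_default.
have hi : i < size la by apply: leq_ltn_trans hj.
have := sorted_leq_nth geq_trans (fun x => leqnn x) 0 hs.
by move=> /(_ i j); rewrite !inE; apply.
Qed.

Definition col_length (la : seq nat) (c : nat) : nat := count (fun x => c < x) la.

Lemma col_lengthP la a c :
  sorted geq la -> (a < col_length la c) = (c < nth 0 la a).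
Proof.
elim: la a => [|x la IH] a; first by rewrite /col_length /= nth_nil.
move=> /= hs; have hs' : sorted geq la := path_sorted hs.
have hall : all (geq x) la by exact: (order_path_min geq_trans hs).
case: (ltnP c x) => hcx.
  rewrite -[true + _]/(col_length la c).+1.
  by case: a => [|a] //=; rewrite ltnS IH.
have h0 : col_length la c = 0.
  apply/eqP; rewrite -leqn0 leqNgt -has_count; apply/hasPn => y hy /=.
  by rewrite -leqNgt (leq_trans _ hcx) //; move/allP: hall => /(_ y hy).
rewrite -[false + _]/(col_length la c) h0.
case: a => [|a] /=; first by rewrite ltnn ltnNge hcx.
symmetry; apply/negbTE; rewrite -leqNgt.
case: (ltnP a (size la)) => ha; last by rewrite nth_default.
by apply: leq_trans hcx; move/allP: hall; apply; apply: mem_nth.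
Qed.

Section Diagram.
Variable la : seq nat.
Hypothesis hla : sorted geq la.
Local Notation N := (sumn la).

Definition row_of (q : 'I_N) : nat := rowpos la q.
Definition col_of (q : 'I_N) : nat := colpos la q.
Definition collen (q : 'I_N) : nat := col_length la (col_of q).

Lemma row_lt q : row_of q < size la.
Proof. exact: rowpos_lt. Qed.

Lemma col_lt q : col_of q < nth 0 la (row_of q).
Proof. exact: colpos_lt. Qed.

Lemma collenP q a : (a < collen q) = (col_of q < nth 0 la a).
Proof. exact: col_lengthP. Qed.

Lemma row_lt_collen q : row_of q < collen q.
Proof. by rewrite collenP col_lt. Qed.

Lemma collen_le q : collen q <= size la.
Proof. exact: count_size. Qed.

Lemma coords_inj q1 q2 : row_of q1 = row_of q2 -> col_of q1 = col_of q2 -> q1 = q2.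
Proof.
move=> hr hc; apply: val_inj => /=.
rewrite -(cell_index_coords (ltn_ord q1)) -(cell_index_coords (ltn_ord q2)).
by rewrite -/(row_of q1) -/(col_of q1) hr hc.
Qed.

Lemma row_of_box a c : c < nth 0 la a -> a < size la.
Proof. by move=> h; case: ltnP => // ha; move: h; rewrite nth_default. Qed.

(* The position of box (a, c), or the default d if there is no such box. *)
Definition box (d : 'I_N) (a c : nat) : 'I_N := insubd d (cell_index la a c).

Lemma box_val d a c : c < nth 0 la a -> val (box d a c) = cell_index la a c.
Proof. by move=> h; rewrite val_insubd cell_index_lt // (row_of_box h). Qed.

Lemma box_row d a c : c < nth 0 la a -> row_of (box d a c) = a.
Proof. by move=> h; rewrite /row_of box_val // rowpos_cell // (row_of_box h). Qed.

Lemma box_col d a c : c < nth 0 la a -> col_of (box d a c) = c.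
Proof. by move=> h; rewrite /col_of box_val // colpos_cell // (row_of_box h). Qed.

(* [flip] turns every column of the diagram upside down; the tableau
   t^la * flip_perm is the column-reversed initial tableau. *)
Definition flip (q : 'I_N) : 'I_N := box q (collen q - 1 - row_of q) (col_of q).

Lemma flip_box q : col_of q < nth 0 la (collen q - 1 - row_of q).
Proof. by rewrite -collenP //; have := row_lt_collen q; lia. Qed.

Lemma flip_row q : row_of (flip q) = collen q - 1 - row_of q.
Proof. exact: box_row (flip_box q). Qed.

Lemma flip_col q : col_of (flip q) = col_of q.
Proof. exact: box_col (flip_box q). Qed.

Lemma flip_collen q : collen (flip q) = collen q.
Proof. by rewrite /collen flip_col. Qed.

Lemma flipK : involutive flip.
Proof.
move=> q; apply: coords_inj; last by rewrite !flip_col.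
by rewrite !flip_row flip_collen; have := row_lt_collen q; lia.
Qed.

Definition flip_perm : 'S_N := perm (can_inj flipK).

Lemma flip_permE q : flip_perm q = flip q.
Proof. by rewrite permE. Qed.

Lemma flip_permV q : (flip_perm^-1)%g q = flip q.
Proof. by rewrite -{1}(flipK q) -flip_permE permK. Qed.

(* We show by descending induction on the
   distance of q to the bottom of its column that al q stays in a column of the same length as q;
   then both al q and be q are the box of q's row in that column. *)
Section Rigidity.
Variables al be : 'S_N.
Hypothesis al_row : forall q, row_of (al q) = row_of q.
Hypothesis be_row : forall q, row_of (flip (be q)) = row_of (flip q).
Hypothesis al_be_col : forall q, col_of (al q) = col_of (be q).

(* If the claim holds strictly below level d, al can only shorten columns on
   level d: otherwise the row of y, cut at column length collen y, would
   receive one more element than it has. *)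
Lemma collen_al_le d :
    (forall y, d < row_of (flip y) -> col_length la (col_of (al y)) = collen y) ->
  forall y, row_of (flip y) = d -> col_length la (col_of (al y)) <= collen y.
Proof.
move=> IH y hy; rewrite leqNgt; apply/negP => hlt.
pose Y := [set z : 'I_N | (row_of z == row_of y) && (col_of z < nth 0 la (collen y))].
have yY : y \notin Y by rewrite inE -collenP ltnn andbF.
have sub : al @: (y |: Y) \subset Y.
  apply/subsetP => z /imsetP [u hu ->].
  move: hu; rewrite in_setU1 => /orP [/eqP -> | uY].
    by rewrite inE al_row eqxx /= -collenP.
  move: uY; rewrite inE => /andP [/eqP ua uc].
  rewrite inE al_row ua eqxx /= -collenP.
  have hLu : collen y < collen u by rewrite collenP.
  rewrite /collen IH //.
  by move: hy; rewrite !flip_row ua; have := row_lt_collen y; lia.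
have := subset_leq_card sub; rewrite card_imset; last exact: perm_inj.
by rewrite cardsU1 yY add1n ltnn.
Qed.

(* On each level, al and be (through flip) permute the same multiset of
   column lengths, so the pointwise inequality is an equality. *)
Lemma collen_al_eq d :
    (forall y, d < row_of (flip y) -> col_length la (col_of (al y)) = collen y) ->
  forall y, row_of (flip y) = d -> col_length la (col_of (al y)) = collen y.
Proof.
move=> IH x hx.
have hs1 : \sum_(z | row_of (flip z) == d) col_length la (col_of (al z)) =
           \sum_(z | row_of z == d) collen z.
  rewrite [RHS](reindex_inj (h := fun z => flip_perm (be z))) /=; last first.
    by move=> u v /perm_inj /perm_inj.
  apply: eq_big => z; first by rewrite flip_permE be_row.
  by move=> _; rewrite flip_permE /collen flip_col al_be_col.
have hs2 : \sum_(z | row_of (flip z) == d) collen z = \sum_(z | row_of z == d) collen z.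
  rewrite [RHS](reindex_inj (h := flip_perm)) /=; last exact: perm_inj.
  by apply: eq_big => z; rewrite flip_permE // => _; rewrite flip_collen.
have := @leqif_sum _ (fun z => row_of (flip z) == d)
  (fun z => col_length la (col_of (al z)) == collen z) _ _
  (fun z hz => leqif_eq (collen_al_le IH (eqP hz))).
move=> [_]; rewrite hs1 hs2 eqxx => /esym /forall_inP /(_ x).
by rewrite hx eqxx => /(_ isT) /eqP.
Qed.

Lemma collen_al q : col_length la (col_of (al q)) = collen q.
Proof.
suff K : forall m d, size la <= d + m ->
    forall y, d <= row_of (flip y) -> col_length la (col_of (al y)) = collen y.
  exact: (K (size la) 0).
elim=> [|m IH] d hd y hy; first by have := row_lt (flip y); lia.
case: (ltnP d (row_of (flip y))) => hdy; first by apply: (IH d.+1) => //; lia.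
apply: (collen_al_eq (d := d)) => [z hz|]; last by lia.
by apply: (IH d.+1) => //; lia.
Qed.

Lemma rows_cols_rigid : al = be.
Proof.
apply/permP => q; apply: coords_inj; last exact: al_be_col.
have e1 := be_row q; rewrite !flip_row in e1.
have e2 : collen (be q) = collen q by rewrite /collen -al_be_col collen_al.
rewrite al_row; move: e1; rewrite e2; have := row_lt_collen q.
have := row_lt_collen (be q); rewrite e2; lia.
Qed.

End Rigidity.
End Diagram.

Lemma row_stab_group la (w : 'S_(sumn la)) : group_set (row_stab la w).
Proof.
apply/group_setP; split; first by rewrite inE; apply/forallP => j; rewrite perm1.
move=> x y; rewrite !inE => /forallP hx /forallP hy; apply/forallP => j.
by rewrite permM (eqP (hy (x j))) (eqP (hx j)).
Qed.

(* The Specht form between t^la and its column-flipped tableau is the order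
   of the group H of permutations preserving the rows of both tableaux: by
   rigidity the only contributing pairs (sg, tau) are the diagonal pairs
   sg = tau in H, and each of them contributes sgn(sg)^2 = 1. *)
Section SpechtFlip.
Variable la : seq nat.
Hypothesis hla : sorted geq la.
Local Notation N := (sumn la).
Local Notation flip_perm := (flip_perm hla).

Definition flip_stab : {set 'S_N} := row_stab la 1 :&: row_stab la flip_perm.

Lemma row_stab1P (sg : 'S_N) : sg \in row_stab la 1 -> forall j, row_of (sg j) = row_of j.
Proof. by rewrite inE => /forallP h j; have := h j; rewrite invg1 !perm1 => /eqP. Qed.

Lemma row_stab_flipP (sg : 'S_N) :
  sg \in row_stab la flip_perm -> forall j, row_of (flip (sg j)) = row_of (flip j).
Proof. by rewrite inE => /forallP h j; have := h j; rewrite !flip_permV => /eqP. Qed.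

Lemma col_tabloid1 (sg : 'S_N) j : col_tabloid la (1 * sg)%g j = col_of ((sg^-1)%g j).
Proof. by rewrite /col_tabloid mul1g. Qed.

Lemma col_tabloid_flip (sg : 'S_N) j :
  col_tabloid la (flip_perm * sg)%g j = col_of ((sg^-1)%g j).
Proof. by rewrite /col_tabloid invMg permM flip_permV; exact: flip_col. Qed.

Lemma contributing_pair_diag (sg tau : 'S_N) :
    sg \in row_stab la 1 -> tau \in row_stab la flip_perm ->
    [forall j, col_tabloid la (1 * sg)%g j == col_tabloid la (flip_perm * tau)%g j] ->
  sg = tau.
Proof.
move=> /row_stab1P h1 /row_stab_flipP h2 /forallP h3.
suff : (sg^-1)%g = (tau^-1)%g by move/(congr1 (fun x => x^-1)%g); rewrite !invgK.
apply: (rows_cols_rigid hla).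
- by move=> x; rewrite -{2}(permKV sg x) h1.
- by move=> x; rewrite -{2}(permKV tau x) h2.
- by move=> x; have := h3 x; rewrite col_tabloid1 col_tabloid_flip => /eqP.
Qed.

Lemma specht_form_flip (k : fieldType) :
  specht_form k la 1 flip_perm = (#|flip_stab|)%:R%R.
Proof.
rewrite /specht_form.
transitivity (\sum_(sg in row_stab la 1) ((sg \in row_stab la flip_perm) : nat)%:R : k)%R.
  apply: eq_bigr => sg hsg.
  case: (boolP (sg \in row_stab la flip_perm)) => hfl.
    rewrite (bigD1 sg) //= big1 ?addr0.
      rewrite -signr_addb addbb expr0 mul1r; congr (_%:R)%R; apply/eqP; rewrite eqb1.
      by apply/forallP => j; rewrite col_tabloid1 col_tabloid_flip.
    move=> tau /andP [htau hne]; case: (boolP [forall _, _]) => hc; last by rewrite mulr0.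
    by move: hne; rewrite (contributing_pair_diag hsg htau hc) eqxx.
  apply: big1 => tau htau; case: (boolP [forall _, _]) => hc; last by rewrite mulr0.
  by move: hfl; rewrite (contributing_pair_diag hsg htau hc) htau.
rewrite -natr_sum; congr (_%:R)%R.
rewrite /flip_stab -sum1_card (big_setID (row_stab la flip_perm)) /= setIC.
rewrite [X in (_ + X)%N]big1 ?addn0; last by move=> i; rewrite inE => /andP [/negbTE ->].
by apply: eq_bigr => i; rewrite inE => /andP [->].
Qed.

Lemma flip_stab_collen (x : 'S_N) : x \in flip_stab -> forall j, collen (x j) = collen j.
Proof.
rewrite inE => /andP [/row_stab1P hrow /row_stab_flipP hfl] j.
have := hfl j; rewrite !(flip_row hla) hrow.
by have := row_lt_collen hla j; have := row_lt_collen hla (x j); rewrite hrow; lia.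
Qed.

(* For a p-restricted partition, the boxes of a row lying in columns of a
   fixed length form a run of fewer than p consecutive boxes. *)
Lemma row_collen_card p (j : 'I_N) : p != 0 -> p_restricted p la ->
  #|[set q : 'I_N | (row_of q == row_of j) && (collen q == collen j)]| < p.
Proof.
move=> p0 hp; set C := [set q | _].
have hLj := row_lt_collen hla j; have hLs := collen_le j.
set Lj := collen j in hLj hLs *.
have hdiff : nth 0 la (Lj - 1) - nth 0 la Lj < p.
  move: hp; rewrite /p_restricted (negbTE p0) /= => /allP /(_ (Lj - 1)).
  rewrite mem_iota add0n => /(_ ltac:(lia)).
  by have -> : (Lj - 1).+1 = Lj by lia.
apply: leq_ltn_trans hdiff.
rewrite cardE -(size_map (@col_of la) (enum C)).
rewrite -(size_iota (nth 0 la Lj) (nth 0 la (Lj - 1) - nth 0 la Lj)).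
apply: uniq_leq_size.
  rewrite map_inj_in_uniq ?enum_uniq // => x y.
  rewrite !mem_enum !inE => /andP [/eqP hx _] /andP [/eqP hy _] hc.
  by apply: coords_inj => //; rewrite hx hy.
move=> c /mapP [q]; rewrite mem_enum inE => /andP [_ /eqP hq] ->.
have h1 : ~~ (Lj < collen q) by rewrite hq ltnn.
have h2 : Lj - 1 < collen q by rewrite hq; lia.
rewrite (collenP hla) in h1; rewrite (collenP hla) in h2.
have hm : nth 0 la Lj <= nth 0 la (Lj - 1) by apply: nth_geq_mono => //; lia.
rewrite mem_iota; lia.
Qed.

(* Elements of H preserve rows and column lengths; for p-restricted la each
   orbit of an element of order p thus lies in a set of fewer than p
   positions, so such an element is trivial. *)
Lemma flip_stab_order_prime p (x : 'S_N) : prime p -> p_restricted p la ->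
  x \in flip_stab -> #[x]%g = p -> x = 1%g.
Proof.
move=> pr hres xH ox.
have hrow := row_stab1P (setIP xH).1; have hL := flip_stab_collen xH.
have hit m j : row_of ((x ^+ m)%g j) = row_of j /\ collen ((x ^+ m)%g j) = collen j.
  elim: m j => [|m IH] j; first by rewrite expg0 perm1.
  by rewrite expgSr permM hrow hL; apply: IH.
apply/permP => j; rewrite perm1.
have sub : porbit x j \subset [set q | (row_of q == row_of j) && (collen q == collen j)].
  apply/subsetP => y /porbitP [i ->]; rewrite inE.
  by have [-> ->] := hit i j; rewrite !eqxx.
have small := leq_ltn_trans (subset_leq_card sub)
  (row_collen_card j (lt0n_neq0 (prime_gt0 pr)) hres).
have hd : #|porbit x j| %| p by rewrite porbitE -ox; apply: dvdn_orbit.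
have orbit1 : #|porbit x j| = 1.
  move/primeP: pr => [_ /(_ _ hd)] /orP [/eqP // | /eqP e].
  by rewrite e ltnn in small.
by have := iter_porbit x j; rewrite orbit1.
Qed.

(* Hence, by Cauchy's theorem, the order of H is invertible in k. *)
Lemma flip_stab_card_neq0 (k : fieldType) p : is_char k p -> p_restricted p la ->
  ((#|flip_stab|)%:R != 0 :> k)%R.
Proof.
pose H := (Group (row_stab_group (1 : 'S_N)) :&: Group (row_stab_group flip_perm))%G.
have -> : flip_stab = H by [].
move=> [[-> h0] | hp] hres.
  have /pcharf0P -> : has_pchar0 k by move=> q; rewrite inE; apply/negbTE/h0.
  by rewrite -lt0n cardG_gt0.
have pr := pcharf_prime hp.
rewrite -(dvdn_pcharf hp); apply/negP => hdiv.
have [x xH ox] := Cauchy pr hdiv.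
have x1 := flip_stab_order_prime pr hres xH ox.
by move: pr; rewrite -ox x1 order1.
Qed.

End SpechtFlip.

Lemma specht_form_restricted_neq0 (k : fieldType) p la (hla : sorted geq la) :
  is_char k p -> p_restricted p la -> specht_form k la 1%g (flip_perm hla) != 0%R.
Proof. by move=> hc hr; rewrite specht_form_flip; apply: flip_stab_card_neq0 hr. Qed.

Section ColumnRotation.
Variables (b p : nat).
Hypothesis p_gt1 : 1 < p.

Definition rot_col (c : nat) : nat :=
  if (b <= c) && (c < b + p) then (if c.+1 == b + p then b else c.+1) else c.

Lemma rot_col_inj : injective rot_col.
Proof.
move=> x y; rewrite /rot_col.
case: ifP => hx; case: ifP => hy; try case: ifP => ex; try case: ifP => ey; move: hx hy;
  rewrite ?ex ?ey; lia.
Qed.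

Lemma iter_rot_col_in n c :
  (b <= c) && (c < b + p) -> iter n rot_col c = b + (c - b + n) %% p.
Proof.
move=> /andP [hc1 hc2]; elim: n => [|n IH]; first by rewrite /= addn0 modn_small; lia.
rewrite iterS IH; set m := c - b + n; rewrite addnS.
have hm : m %% p < p by rewrite ltn_mod; lia.
rewrite /rot_col leq_addr ltn_add2l hm /=.
have -> : m.+1 %% p = ((m %% p).+1) %% p by rewrite -addn1 -modnDml addn1.
move: (m %% p) hm => x hx.
case: eqP => e; last by rewrite modn_small; lia.
have -> : x.+1 = p by lia.
by rewrite modnn addn0.
Qed.

Lemma iter_rot_col_p c : iter p rot_col c = c.
Proof.
case: (boolP ((b <= c) && (c < b + p))) => hc.
  by rewrite iter_rot_col_in // modnDr modn_small; move: hc => /andP[]; lia.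
by elim: p => [|n IH] //=; rewrite IH /rot_col (negbTE hc).
Qed.

End ColumnRotation.

(* If row i of la exceeds row i+1 by at least p boxes, the columns
   b = la_{i+1}, ..., b + p - 1 all have length exactly i + 1, so rotating
   them inside each row is a permutation of the positions; it generates a
   group of order p acting on rows trivially and on columns by rot_col. *)
Section RotationPerm.
Variable la : seq nat.
Hypothesis hla : sorted geq la.
Local Notation N := (sumn la).
Variables (i p : nat).
Hypothesis p_gt1 : 1 < p.
Hypothesis gap : nth 0 la i.+1 + p <= nth 0 la i.
Local Notation b := (nth 0 la i.+1).

Lemma rot_col_box (q : 'I_N) : rot_col b p (col_of q) < nth 0 la (row_of q).
Proof.
have hc := col_lt q; rewrite /rot_col; case: ifP => // /andP [h1 h2].
have hr : row_of q <= i.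
  by rewrite leqNgt; apply/negP => hr; have := nth_geq_mono hla hr; lia.
by have := nth_geq_mono hla hr; case: eqP => e; lia.
Qed.

Definition rot_pos (q : 'I_N) : 'I_N := box q (row_of q) (rot_col b p (col_of q)).

Lemma rot_pos_row q : row_of (rot_pos q) = row_of q.
Proof. exact: box_row (rot_col_box q). Qed.

Lemma rot_pos_col q : col_of (rot_pos q) = rot_col b p (col_of q).
Proof. exact: box_col (rot_col_box q). Qed.

Lemma rot_pos_inj : injective rot_pos.
Proof.
move=> x y e; apply: coords_inj; first by rewrite -rot_pos_row e rot_pos_row.
by apply: (@rot_col_inj b p p_gt1); rewrite -!rot_pos_col e.
Qed.

Definition rot_perm : 'S_N := perm rot_pos_inj.

Lemma rot_perm_expE n q :
  row_of ((rot_perm ^+ n)%g q) = row_of q /\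
  col_of ((rot_perm ^+ n)%g q) = iter n (rot_col b p) (col_of q).
Proof.
elim: n q => [|n IH] q; first by rewrite expg0 perm1.
by rewrite expgSr permM permE rot_pos_row rot_pos_col; have [-> ->] := IH q.
Qed.

Lemma rot_perm_neq1 : rot_perm != 1%g.
Proof.
have h0 : 0 < nth 0 la 0 by have := nth_geq_mono hla (leq0n i); lia.
have hN : 0 < N.
  by move: (cell_index_lt (row_of_box h0) h0); rewrite /cell_index take0.
have hb : b < nth 0 la 0 by have := nth_geq_mono hla (leq0n i); lia.
pose q := box (Ordinal hN) 0 b.
apply/eqP => e; have := rot_pos_col q; rewrite -(permE rot_pos_inj) -/rot_perm e perm1.
rewrite /q (box_col _ hb) /rot_col leqnn /= -{2}(addn0 b) ltn_add2l.
by rewrite (ltn_trans _ p_gt1) //; case: eqP => e2; lia.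
Qed.

Lemma rot_perm_pgroup : prime p -> pgroup p <[rot_perm]>%g.
Proof.
move=> pr; apply: (@pnat_dvd _ p); last exact: pnat_id.
rewrite -/(order rot_perm) order_dvdn; apply/eqP/permP => q; rewrite perm1.
have [h1 h2] := rot_perm_expE p q.
by apply: coords_inj => //; rewrite h2 iter_rot_col_p.
Qed.

End RotationPerm.

Section ContributingPairs.
Variable la : seq nat.
Local Notation N := (sumn la).
Variables w v : 'S_N.

Definition contrib (c : bool) : {set 'S_N * 'S_N} :=
  [set s : 'S_N * 'S_N | [&& s.1 \in row_stab la w, s.2 \in row_stab la v,
     [forall j, col_tabloid la (w * s.1) j == col_tabloid la (v * s.2) j] &
     (odd_perm s.1 (+) odd_perm s.2) == c]].

Lemma specht_form_contrib (k : fieldType) :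
  specht_form k la w v = (#|contrib false|%:R - #|contrib true|%:R)%R.
Proof.
have sum_ind c : (\sum_(s | (s.1 \in row_stab la w) && (s.2 \in row_stab la v))
     (s \in contrib c) : nat)%N = #|contrib c|.
  rewrite -sum1_card big_mkcond [RHS]big_mkcond; apply: eq_bigr => s _.
  case: (boolP (s \in contrib c)) => hs; last by case: ifP.
  by move: (hs); rewrite in_set => /and4P [-> -> _ _].
rewrite /specht_form pair_big_dep /= -(sum_ind false) -(sum_ind true) !natr_sum -sumrB.
apply: eq_bigr => [[x y]] /= /andP [hx hy].
have mem c : ((x, y) \in contrib c) =
    [forall j, col_tabloid la (w * x) j == col_tabloid la (v * y) j] &&
    (odd_perm x (+) odd_perm y == c).
  by rewrite in_set /= hx hy.
rewrite !mem.
case: [forall _, _] => /=; last by rewrite mulr0 subr0.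
rewrite mulr1 -signr_addb; case: (odd_perm x (+) odd_perm y) => /=.
  by rewrite expr1 sub0r.
by rewrite expr0 subr0.
Qed.

Definition pair_act_fun (s : 'S_N * 'S_N) (a : 'S_N) : 'S_N * 'S_N :=
  ((w^-1 * a^-1 * w * s.1)%g, (v^-1 * a^-1 * v * s.2)%g).

Lemma pair_act_fun1 : pair_act_fun^~ 1%g =1 id.
Proof. by case=> x y; rewrite /pair_act_fun /= invg1 !mulg1 !mulVg !mul1g. Qed.

Lemma pair_act_funM s : act_morph pair_act_fun s.
Proof.
move=> a b; case: s => x y; rewrite /pair_act_fun /= invMg.
by congr (_, _); rewrite !mulgA mulgK.
Qed.

Definition pair_act := TotalAction pair_act_fun1 pair_act_funM.

(* If a preserves every row and moves columns as a whole (by some g), then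
   its action preserves row stabilisers, agreement of column tabloids and
   sign parity; so it stabilises each set of contributing pairs. *)
Section RowColumnPerm.
Variable a : 'S_N.
Variable g : nat -> nat.
Hypothesis a_row : forall q, row_of (a q) = row_of q.
Hypothesis a_col : forall q, col_of (a q) = g (col_of q).

Lemma row_stab_conj (u x : 'S_N) :
  x \in row_stab la u -> (u^-1 * a^-1 * u * x)%g \in row_stab la u.
Proof.
rewrite !inE => /forallP h; apply/forallP => j; rewrite !permM.
rewrite (eqP (h _)) permK.
by have := a_row ((a^-1)%g ((u^-1)%g j)); rewrite permKV => e; rewrite -/(row_of _) -e.
Qed.

Lemma col_tabloid_conj (u x : 'S_N) j :
  col_tabloid la (u * (u^-1 * a^-1 * u * x)) j = g (col_tabloid la (u * x) j).
Proof.
have -> : (u * (u^-1 * a^-1 * u * x) = a^-1 * (u * x))%g by rewrite !mulgA mulgV mul1g.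
by rewrite /col_tabloid invMg invgK permM; apply: a_col.
Qed.

Lemma odd_perm_conj (u x : 'S_N) :
  odd_perm (u^-1 * a^-1 * u * x)%g = odd_perm a (+) odd_perm x.
Proof.
rewrite !odd_permM !odd_permV.
by case: (odd_perm u); case: (odd_perm a); case: (odd_perm x).
Qed.

Lemma contrib_stable c s : s \in contrib c -> pair_act_fun s a \in contrib c.
Proof.
rewrite in_set /pair_act_fun /= => /and4P [h1 h2 h3 h4].
rewrite in_set /= !row_stab_conj //=; apply/andP; split.
  by apply/forallP => j; rewrite !col_tabloid_conj (eqP (forallP h3 j)).
rewrite !odd_perm_conj; move: h4.
by case: (odd_perm a); case: (odd_perm s.1); case: (odd_perm s.2).
Qed.

End RowColumnPerm.
End ContributingPairs.

(* Second half of James's criterion: if la_i - la_{i+1} >= p for a prime p,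
   the cyclic p-group generated by the column rotation acts without fixed
   points on each set of contributing pairs, so their sizes are divisible by
   p and the Specht form vanishes in characteristic p. *)
Section SpechtVanishing.
Variable la : seq nat.
Hypothesis hla : sorted geq la.
Local Notation N := (sumn la).
Variables (i p : nat).
Hypothesis p_prime : prime p.
Hypothesis gap : nth 0 la i.+1 + p <= nth 0 la i.
Local Notation p_gt1 := (prime_gt1 p_prime).
Local Notation rot := (rot_perm hla p_gt1 gap).
Variables w v : 'S_N.

Lemma rot_acts_contrib c : [acts <[rot]>%g, on contrib w v c | pair_act w v].
Proof.
have st a s : a \in <[rot]>%g -> s \in contrib w v c -> pair_act w v s a \in contrib w v c.
  case/cycleP => m -> /=; apply: (@contrib_stable _ _ _ _ (iter m (rot_col (nth 0 la i.+1) p))).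
    by move=> q; have [] := rot_perm_expE hla p_gt1 gap m q.
  by move=> q; have [] := rot_perm_expE hla p_gt1 gap m q.
apply/subsetP => a ha; apply/astabsP => s; apply/idP/idP => hs; last exact: st.
by have := st _ _ (groupVr ha) hs; rewrite actK.
Qed.

Lemma rot_fixes_no_contrib c : #|('Fix_(contrib w v c | pair_act w v)(<[rot]>))%g| = 0.
Proof.
apply: eq_card0 => s; apply/negP => /setIP [_ /afixP /(_ rot (cycle_id rot))].
case: s => x y /= [] /(congr1 (fun z => z * x^-1)%g); rewrite mulgK mulgV => e.
have : (rot^-1 = 1)%g.
  have -> : (rot^-1 = w * (w^-1 * rot^-1 * w) * w^-1)%g.
    by rewrite !mulgA mulgV mul1g mulgK.
  by rewrite e mulg1 mulgV.
by move/eqP; rewrite invg_eq1 (negbTE (rot_perm_neq1 hla p_gt1 gap)).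
Qed.

Lemma dvdn_card_contrib c : p %| #|contrib w v c|.
Proof.
have := pgroup_fix_mod (rot_perm_pgroup hla p_gt1 gap p_prime) (rot_acts_contrib c).
by rewrite rot_fixes_no_contrib mod0n => /eqP.
Qed.

Lemma specht_form_gap_eq0 (k : fieldType) : p \in [pchar k]%R -> specht_form k la w v = 0%R.
Proof.
move=> hk; have hS c : (#|contrib w v c|%:R : k)%R = 0%R.
  by apply/eqP; rewrite -(dvdn_pcharf hk) dvdn_card_contrib.
by rewrite specht_form_contrib !hS subr0.
Qed.

End SpechtVanishing.

Lemma specht_form_nonzeroP (k : fieldType) p la (hla : sorted geq la) : is_char k p ->
  (exists w v : 'S_(sumn la), specht_form k la w v != 0%R) <-> p_restricted p la.
Proof.
move=> hc; split; last first.
  by move=> hr; exists 1%g, (flip_perm hla); exact: specht_form_restricted_neq0 hc hr.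
move=> [w [v hnz]]; apply/negPn/negP => hnr.
have hp0 : p != 0 by move: hnr; rewrite /p_restricted; case: eqP.
have hk : p \in [pchar k]%R by case: hc => [[/eqP e _]|//]; rewrite e in hp0.
move: hnr; rewrite /p_restricted (negbTE hp0) /= => /allPn [i _].
rewrite -leqNgt => hle.
have gap : nth 0 la i.+1 + p <= nth 0 la i by have := nth_geq_mono hla (leqnSn i); lia.
by move: hnz; rewrite (specht_form_gap_eq0 hla (pcharf_prime hk) gap w v hk) eqxx.
Qed.

Lemma min_coset_rep1 n mu : min_coset_rep mu (1%g : 'S_n).
Proof.
rewrite /min_coset_rep; suff -> : inversions (1%g : 'S_n) = 0 by apply/forall_inP.
apply: eq_card0 => ij; rewrite inE !perm1; apply/negP => /andP [h1 h2].
by have := ltn_trans h1 h2; rewrite ltnn.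
Qed.

Lemma sumn_partition_gt0 la : is_partition la -> la != [::] -> 0 < sumn la.
Proof. by case: la => [|x l] //= /andP [_ /= /andP [hx _]] _; lia. Qed.

(* The tensor factors Delta(lambda_i)^{(x) mu_i} of Delta^nu carry a nonzero
   form as soon as lambda_i is in Lambda_0 or mu_i = 0 (an empty tensor
   power); in that case we may choose a pair of basis vectors with nonzero
   pairing in every tensor slot. *)
Lemma cell_form_witness (k : fieldType) (A : falgType k) (D : cellular_datum A)
    (nu : 'I_(cd_r D) -> seq nat) :
    (forall i, ~ in_Lambda0 D i -> nu i = [::]) ->
  forall i, 'I_(wr_mu nu i) -> {st : 'I_(cd_M D i) * 'I_(cd_M D i) | cd_phi D i st.1 st.2 != 0%R}.
Proof.
move=> hL i j; apply: sigW.
have [/existsP // | hn] := boolP [exists st : 'I_(cd_M D i) * 'I_(cd_M D i),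
  cd_phi D i st.1 st.2 != 0%R].
have nu0 : nu i = [::].
  by apply: hL => -[s [t hst]]; apply: (negP hn); apply/existsP; exists (s, t).
by have := ltn_ord j; rewrite {2}/wr_mu nu0.
Qed.

Unset Implicit Arguments.

Theorem theorem5p2 (k : fieldType) (p : nat) (hp : is_char k p)
  (A : falgType k) (D : cellular_datum A) (n : nat)
  (nu : 'I_(cd_r D) -> seq nat) (hnu : is_multipartition n nu) :
  wreath_form_nonzero D n nu <->
  (forall i : 'I_(cd_r D), ~ in_Lambda0 D i -> nu i = [::]) /\
  (forall i : 'I_(cd_r D), p_restricted p (nu i)).
Proof.
have hla i : sorted geq (nu i) by case: hnu => /(_ i) /andP [].
split.
  move=> [g [g' [_ _ [x [x' [y [y' /=]]]]]]].
  rewrite /wreath_form !mulf_eq0 !negb_or => /andP [/andP [_ /prodf_neq0 hs] /prodf_neq0 hph].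
  split=> i; last by apply/(specht_form_nonzeroP (hla i) hp); exists (y i), (y' i); exact: hs.
  move=> hL; case E: (nu i) => [|a l] //; exfalso; apply: hL.
  have hpos : 0 < wr_mu nu i by apply: sumn_partition_gt0; [case: hnu | rewrite E].
  have := prodf_neq0 _ _ (hph i isT) (Ordinal hpos) isT.
  by exists (x i (Ordinal hpos)), (x' i (Ordinal hpos)).
move=> [hL hR].
pose st i j := sval (cell_form_witness hL (i := i) j).
exists 1%g, 1%g; split; try exact: min_coset_rep1.
exists (fun i j => (st i j).1), (fun i j => (st i j).2).
exists (fun i => 1%g), (fun i => flip_perm (hla i)).
rewrite /wreath_form eqxx mul1r mulf_neq0 //; apply/prodf_neq0 => i _.
  exact: specht_form_restricted_neq0 hp (hR i).
by apply/prodf_neq0 => j _; rewrite /st; case: cell_form_witness.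
Qed.
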